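(* Let $n$ be a positive even integer and let $f$ be a real polynomial of degree $d\le 5$. Then the Abel equation $$x'=t^{n-1}x^2+f(t)x^3,\qquad t\in[-1,1],$$ has a center at $x=0$ if and only if $f$ is an odd polynomial (i.e. contains only odd powers of $t$).
   Context: The Abel equation $x'=g(t)x^2+f(t)x^3$ on $[-1,1]$ (with $x$ real) is said to have a center at $x=0$ if every solution $x(t)$ whose initial value $x(-1)$ is small enough in absolute value is defined on $[-1,1]$ and satisfies $x(-1)=x(1)$. *)

From Stdlib Require Import Reals Lra Arith.
From Coquelicot Require Import Coquelicot.
Open Scope R_scope.

Definition poly_eval (a : nat -> R) (N : nat) (t : R) : R :=
  sum_f_R0 (fun i => a i * t ^ i) N.

Definition abel_solution (g f : R -> R) (phi : R -> R) : Prop :=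
  (forall t, -1 <= t <= 1 ->
     filterlim phi (within (fun u => -1 <= u <= 1) (locally t)) (locally (phi t)))
  /\ (forall t, -1 < t < 1 ->
     is_derive phi t (g t * phi t ^ 2 + f t * phi t ^ 3)).

Definition abel_center (g f : R -> R) : Prop :=
  exists eps : R, 0 < eps /\
    forall x0 : R, Rabs x0 < eps ->
      (exists phi, abel_solution g f phi /\ phi (-1) = x0) /\
      (forall phi, abel_solution g f phi -> phi (-1) = x0 -> phi 1 = x0).

(* If the even coefficients of f vanish, both g = t^(n-1) and f are odd, so t |-> phi(-t)
   solves the equation whenever phi does; by uniqueness it agrees with phi from t = 0 on,
   hence phi(1) = phi(-1).

   Conversely, let phi be the solution with phi(-1) = x > 0 small (it exists by Picard
   iteration applied to the equation with the unknown saturated at level 2x). With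
   G = (t^n - 1)/n we have (1/phi + G)' = -f phi, so phi(1) = phi(-1) forces
   int_{-1}^{1} f phi = 0.  Expanding phi = x + x^2 G + x^3 (G^2 + F) + O(x^4), where
   F = int_{-1}^{t} f, the coefficients of x, x^2, x^3 must vanish; these say that the
   moments int_{-1}^{1} t^m f(t) dt vanish for m = 0, n, 2n.  For the even part
   a0 + a2 t^2 + a4 t^4 of f this is a nonsingular 3 x 3 linear system, so a0 = a2 = a4 = 0. *)

From Stdlib Require Import Reals Arith Lra Lia Psatz.
From Coquelicot Require Import Coquelicot.
Open Scope R_scope.

Lemma lipschitz_continuous (f : R -> R) K :
  (forall x y, Rabs (f x - f y) <= K * Rabs (x - y)) -> forall x, continuous f x.
Proof.
  intros Hf x. apply filterlim_locally. intros [e He].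
  assert (HK : 0 <= Rabs K) by apply Rabs_pos.
  exists (mkposreal (e / (Rabs K + 1)) ltac:(apply Rdiv_lt_0_compat; lra)).
  intros y Hy. change (Rabs (y - x) < e / (Rabs K + 1)) in Hy. change (Rabs (f y - f x) < e).
  assert (Hxy : K * Rabs (y - x) <= Rabs K * (e / (Rabs K + 1))).
  { eapply Rle_trans. apply RRle_abs. rewrite Rabs_mult, Rabs_Rabsolu.
    apply Rmult_le_compat_l; lra. }
  assert (Rabs K * (e / (Rabs K + 1)) < e).
  { apply Rmult_lt_reg_r with (Rabs K + 1). lra.
    replace (Rabs K * (e / (Rabs K + 1)) * (Rabs K + 1)) with (Rabs K * e) by (field; lra).
    nra. }
  specialize (Hf y x). lra.
Qed.

Lemma MVT_Rabs_le (u du : R -> R) a b B : a <= b ->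
  (forall x, continuous u x) ->
  (forall x, a < x < b -> is_derive u x (du x)) ->
  (forall x, a <= x <= b -> Rabs (du x) <= B) ->
  Rabs (u b - u a) <= B * (b - a).
Proof.
  intros Hab Hc Hd HB.
  destruct (MVT_gen u a b du) as [c [Hc' ->]];
    rewrite ?Rmin_left, ?Rmax_right in * by lra; auto.
  - intros; apply continuity_pt_filterlim, Hc.
  - rewrite Rabs_mult, (Rabs_right (b - a)) by lra.
    apply Rmult_le_compat_r; [lra | apply HB; lra].
Qed.

Lemma MVT_nonincreasing (u du : R -> R) a b : a <= b ->
  (forall x, continuous u x) ->
  (forall x, a < x < b -> is_derive u x (du x)) ->
  (forall x, a <= x <= b -> du x <= 0) -> u b <= u a.
Proof.
  intros Hab Hc Hd HB.
  destruct (MVT_gen u a b du) as [c [Hc' Hu]];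
    rewrite ?Rmin_left, ?Rmax_right in * by lra; auto.
  - intros; apply continuity_pt_filterlim, Hc.
  - assert (du c * (b - a) <= 0) by (apply Rmult_le_0_r; [apply HB|]; lra). lra.
Qed.

(* Coquelicot's lemmas specialized to real-valued functions, so that [apply] can
   infer the function arguments. *)
Lemma RInt_minus_R (f g : R -> R) a b : ex_RInt f a b -> ex_RInt g a b ->
  RInt (fun x => f x - g x) a b = RInt f a b - RInt g a b.
Proof. intros. apply (RInt_minus f g a b); auto. Qed.

Lemma RInt_Chasles_R (h : R -> R) a b c : ex_RInt h a b -> ex_RInt h b c ->
  RInt h a b + RInt h b c = RInt h a c.
Proof. intros. apply (RInt_Chasles h a b c); auto. Qed.

Lemma is_lim_seq_le_R (u v : nat -> R) (l1 l2 : R) :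
  (forall n, u n <= v n) -> is_lim_seq u l1 -> is_lim_seq v l2 -> l1 <= l2.
Proof. intros. apply (is_lim_seq_le u v l1 l2); auto. Qed.

Lemma is_derive_Rplus (u v : R -> R) (x du dv : R) :
  is_derive u x du -> is_derive v x dv -> is_derive (fun t => u t + v t) x (du + dv).
Proof. intros; apply (is_derive_plus u v); auto. Qed.

Lemma is_derive_Rminus (u v : R -> R) (x du dv : R) :
  is_derive u x du -> is_derive v x dv -> is_derive (fun t => u t - v t) x (du - dv).
Proof. intros; apply (is_derive_minus u v); auto. Qed.

Lemma is_derive_Rscal (c : R) (u : R -> R) (x du : R) :
  is_derive u x du -> is_derive (fun t => c * u t) x (c * du).
Proof. intros; apply (is_derive_scal u); auto. Qed.

Lemma continuous_Rplus (u v : R -> R) x :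
  continuous u x -> continuous v x -> continuous (fun t => u t + v t) x.
Proof. intros; apply (continuous_plus u v); auto. Qed.

Lemma continuous_Rscal (c : R) (u : R -> R) x :
  continuous u x -> continuous (fun t => c * u t) x.
Proof. intros; apply (continuous_scal_r c u); auto. Qed.

Lemma is_derive_value (h : R -> R) (x l l' : R) : is_derive h x l -> l = l' -> is_derive h x l'.
Proof. intros; subst; auto. Qed.

Lemma continuous_pow_comp (u : R -> R) k x : continuous u x -> continuous (fun t => u t ^ k) x.
Proof.
  intros Hu. apply (continuous_comp u (fun z => z ^ k)); auto.
  apply (ex_derive_continuous (fun z : R => z ^ k)). auto_derive. auto.
Qed.

Lemma continuous_of_is_derive (u : R -> R) (x du : R) : is_derive u x du -> continuous u x.
Proof. intros; apply (ex_derive_continuous u). exists du; auto. Qed.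

Lemma RInt_Rabs_le_const (h : R -> R) a b M :
  (forall t, Rabs (h t) <= M) -> ex_RInt h a b -> Rabs (RInt h a b) <= M * Rabs (b - a).
Proof.
  intros Hh Hi. destruct (Rle_dec a b) as [Hab|Hab].
  - rewrite (Rabs_right (b - a)), Rmult_comm by lra.
    apply abs_RInt_le_const; auto.
  - rewrite <- opp_RInt_swap by (apply ex_RInt_swap; auto). unfold opp; simpl.
    rewrite Rabs_Ropp, (Rabs_left (b - a)), Ropp_minus_distr, Rmult_comm by lra.
    apply abs_RInt_le_const; auto. lra. apply ex_RInt_swap; auto.
Qed.

(* Composing with [clamp] extends functions given on [-1, 1] to the whole line. *)
Definition clamp (t : R) : R := Rmax (-1) (Rmin 1 t).

Lemma clamp_in t : -1 <= clamp t <= 1.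
Proof. unfold clamp, Rmax, Rmin; repeat destruct Rle_dec; lra. Qed.

Lemma clamp_id t : -1 <= t <= 1 -> clamp t = t.
Proof. intros; unfold clamp, Rmax, Rmin; repeat destruct Rle_dec; lra. Qed.

Lemma clamp_opp t : clamp (- t) = - clamp t.
Proof. unfold clamp, Rmax, Rmin; repeat destruct Rle_dec; lra. Qed.

Lemma clamp_lipschitz t u : Rabs (clamp t - clamp u) <= Rabs (t - u).
Proof. unfold clamp, Rmax, Rmin, Rabs; repeat destruct Rle_dec; repeat destruct Rcase_abs; lra. Qed.

Lemma continuous_clamp t : continuous clamp t.
Proof.
  apply lipschitz_continuous with 1. intros; rewrite Rmult_1_l; apply clamp_lipschitz.
Qed.

Lemma continuous_within_I_iff_clamp (phi : R -> R) :
  (forall t, -1 <= t <= 1 ->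
     filterlim phi (within (fun u => -1 <= u <= 1) (locally t)) (locally (phi t)))
  <-> forall t, continuous (fun u => phi (clamp u)) t.
Proof.
  split.
  - intros Hp t P HP.
    destruct (Hp (clamp t) (clamp_in t) P HP) as [eps He].
    exists eps. intros y Hy. apply He. 2: apply clamp_in.
    change (Rabs (clamp y - clamp t) < eps).
    eapply Rle_lt_trans. apply clamp_lipschitz. exact Hy.
  - intros Hc t Ht P HP.
    specialize (Hc t). unfold continuous in Hc. rewrite clamp_id in Hc by exact Ht.
    destruct (Hc P HP) as [eps He]. exists eps. intros y Hy Iy.
    specialize (He y Hy). simpl in He. rewrite clamp_id in He; auto.
Qed.

Lemma locally_open_I x : -1 < x < 1 -> locally x (fun y => -1 < y < 1).
Proof.
  intros Hx.
  exists (mkposreal (Rmin (x + 1) (1 - x)) ltac:(apply Rmin_glb_lt; lra)).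
  intros y Hy. change (Rabs (y - x) < Rmin (x + 1) (1 - x)) in Hy.
  pose proof (Rmin_l (x + 1) (1 - x)). pose proof (Rmin_r (x + 1) (1 - x)).
  apply Rabs_def2 in Hy. lra.
Qed.

Lemma is_derive_clamp_comp (phi : R -> R) x l : -1 < x < 1 -> is_derive phi x l ->
  is_derive (fun u => phi (clamp u)) x l.
Proof.
  intros Hx Hd. apply is_derive_ext_loc with phi; auto.
  eapply filter_imp. 2: apply locally_open_I; eauto.
  intros y Hy. simpl. rewrite clamp_id; auto. lra.
Qed.

(** * Picard iteration *)

Lemma is_lim_seq_half_pow C : is_lim_seq (fun k => C * (1/2) ^ k) 0.
Proof.
  rewrite <- (Rmult_0_r C). apply (is_lim_seq_scal_l _ C 0).
  apply is_lim_seq_geom. rewrite Rabs_right; lra.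
Qed.

Lemma half_pow_eventually_lt C (eps : posreal) : exists N, C * (1/2) ^ N < eps.
Proof.
  destruct (proj2 (is_lim_seq_spec _ _) (is_lim_seq_half_pow C) eps) as [N HN].
  exists N. specialize (HN N (le_n N)). rewrite Rminus_0_r in HN.
  eapply Rle_lt_trans. apply RRle_abs. exact HN.
Qed.

Lemma is_lim_seq_half_pow_close (u : nat -> R) l C :
  (forall k, Rabs (u k - l) <= C * (1/2) ^ k) -> is_lim_seq u l.
Proof.
  intros Hu.
  apply is_lim_seq_le_le with (fun k => l - C * (1/2) ^ k) (fun k => l + C * (1/2) ^ k).
  - intros k. apply Rabs_le_between', Hu.
  - pose proof (is_lim_seq_minus' _ _ _ 0 (is_lim_seq_const l) (is_lim_seq_half_pow C)) as H.
    rewrite Rminus_0_r in H. exact H.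
  - pose proof (is_lim_seq_plus' _ _ _ 0 (is_lim_seq_const l) (is_lim_seq_half_pow C)) as H.
    rewrite Rplus_0_r in H. exact H.
Qed.

Section Picard.

Variables (F : R -> R -> R) (M L x0 : R).
Hypothesis F_bound : forall t y, Rabs (F t y) <= M.
Hypothesis F_lipschitz : forall t y z, Rabs (F t y - F t z) <= L * Rabs (y - z).
Hypothesis F_continuous : forall psi : R -> R, (forall t, continuous psi t) ->
  forall t, continuous (fun s => F s (psi s)) t.
Hypothesis L_small : 4 * L <= 1.

Let M_nonneg : 0 <= M.
Proof. eapply Rle_trans. apply Rabs_pos. apply (F_bound 0 0). Qed.

Let L_nonneg : 0 <= L.
Proof.
  pose proof (F_lipschitz 0 1 0). pose proof (Rabs_pos (F 0 1 - F 0 0)).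
  rewrite Rminus_0_r, Rabs_R1 in *. lra.
Qed.

Definition picard_step (psi : R -> R) (t : R) : R :=
  x0 + RInt (fun s => F s (psi s)) (-1) (clamp t).

Fixpoint picard_iter (k : nat) : R -> R :=
  match k with O => fun _ => x0 | S k => picard_step (picard_iter k) end.

Lemma ex_RInt_F_comp psi a b : (forall t, continuous psi t) ->
  ex_RInt (fun s => F s (psi s)) a b.
Proof.
  intros Hpsi. apply (ex_RInt_continuous (V := R_CompleteNormedModule)).
  intros; apply F_continuous; auto.
Qed.

Lemma picard_step_lipschitz psi t u : (forall t, continuous psi t) ->
  Rabs (picard_step psi t - picard_step psi u) <= M * Rabs (t - u).
Proof.
  intros Hpsi. unfold picard_step.
  rewrite <- (RInt_Chasles_R _ (-1) (clamp u) (clamp t)) by (apply ex_RInt_F_comp; auto).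
  rewrite <- Rplus_assoc, Rplus_minus_l.
  eapply Rle_trans. apply RInt_Rabs_le_const; auto. apply ex_RInt_F_comp; auto.
  apply Rmult_le_compat_l; auto. apply clamp_lipschitz.
Qed.

Lemma picard_step_continuous psi t : (forall t, continuous psi t) ->
  continuous (picard_step psi) t.
Proof.
  intros Hpsi. apply lipschitz_continuous with M. intros; apply picard_step_lipschitz; auto.
Qed.

Lemma picard_iter_continuous k t : continuous (picard_iter k) t.
Proof.
  revert t; induction k; intros t.
  - apply continuous_const.
  - apply picard_step_continuous; auto.
Qed.

Lemma picard_step_dist psi t : (forall t, continuous psi t) ->
  Rabs (picard_step psi t - x0) <= 2 * M.
Proof.
  intros Hpsi. unfold picard_step.
  rewrite Rplus_minus_l.
  eapply Rle_trans. apply RInt_Rabs_le_const; auto. apply ex_RInt_F_comp; auto.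
  pose proof (clamp_in t). rewrite Rabs_right by lra. nra.
Qed.

Lemma picard_step_contraction psi1 psi2 e t :
  (forall t, continuous psi1 t) -> (forall t, continuous psi2 t) ->
  (forall s, Rabs (psi1 s - psi2 s) <= e) ->
  Rabs (picard_step psi1 t - picard_step psi2 t) <= e / 2.
Proof.
  intros H1 H2 He. unfold picard_step.
  rewrite Rminus_plus_l_l, <- RInt_minus_R by (apply ex_RInt_F_comp; auto).
  assert (He0 : 0 <= e) by (eapply Rle_trans; [apply Rabs_pos | apply (He 0)]).
  eapply Rle_trans. apply RInt_Rabs_le_const with (M := L * e).
  - intros s. eapply Rle_trans. apply F_lipschitz. apply Rmult_le_compat_l; auto.
  - apply (ex_RInt_minus (V := R_NormedModule) (fun s => F s (psi1 s)) (fun s => F s (psi2 s)));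
      apply ex_RInt_F_comp; auto.
  - pose proof (clamp_in t). rewrite Rabs_right by lra.
    assert (0 <= L * e) by (apply Rmult_le_pos; auto). nra.
Qed.

Lemma picard_iter_step k t :
  Rabs (picard_iter (S k) t - picard_iter k t) <= 2 * M * (1/2) ^ k.
Proof.
  revert t; induction k; intros t.
  - simpl (picard_iter 0). rewrite pow_O, Rmult_1_r.
    apply picard_step_dist. intros; apply continuous_const.
  - replace (2 * M * (1/2) ^ S k) with (2 * M * (1/2) ^ k / 2) by (simpl; field).
    apply picard_step_contraction; [exact (picard_iter_continuous (S k)) |
      exact (picard_iter_continuous k) | exact IHk].
Qed.

Lemma picard_iter_tail m k t :
  Rabs (picard_iter (m + k) t - picard_iter k t) <= 4 * M * (1/2) ^ k - 4 * M * (1/2) ^ (m + k).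
Proof.
  induction m.
  - simpl. rewrite Rminus_diag, Rabs_R0. lra.
  - replace (picard_iter (S m + k) t - picard_iter k t)
      with ((picard_iter (S (m + k)) t - picard_iter (m + k) t)
            + (picard_iter (m + k) t - picard_iter k t)) by (simpl; ring).
    eapply Rle_trans. apply Rabs_triang.
    pose proof (picard_iter_step (m + k) t).
    replace ((1/2) ^ (S m + k)) with ((1/2) ^ (m + k) / 2) by (simpl; field). lra.
Qed.

Lemma picard_iter_tail_le m k t :
  Rabs (picard_iter (m + k) t - picard_iter k t) <= 4 * M * (1/2) ^ k.
Proof.
  eapply Rle_trans. apply picard_iter_tail.
  assert (0 <= M * (1/2) ^ (m + k)) by (apply Rmult_le_pos; auto; apply pow_le; lra). lra.
Qed.

Lemma picard_iter_cauchy t : ex_finite_lim_seq (fun k => picard_iter k t).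
Proof.
  apply ex_lim_seq_cauchy_corr. intros eps.
  destruct (half_pow_eventually_lt (8 * M) eps) as [N HN].
  exists N. intros p q Hp Hq.
  replace (picard_iter p t - picard_iter q t)
    with ((picard_iter ((p - N) + N) t - picard_iter N t)
          - (picard_iter ((q - N) + N) t - picard_iter N t))
    by (replace ((p - N) + N)%nat with p by lia; replace ((q - N) + N)%nat with q by lia; ring).
  eapply Rle_lt_trans. apply Rabs_triang. rewrite Rabs_Ropp.
  pose proof (picard_iter_tail_le (p - N) N t). pose proof (picard_iter_tail_le (q - N) N t).
  lra.
Qed.

Definition picard_limit (t : R) : R := real (Lim_seq (fun k => picard_iter k t)).

Lemma is_lim_seq_picard t : is_lim_seq (fun k => picard_iter k t) (picard_limit t).
Proof.
  destruct (picard_iter_cauchy t) as [l Hl]. unfold picard_limit.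
  rewrite (is_lim_seq_unique _ _ Hl). exact Hl.
Qed.

Lemma picard_limit_dist k t : Rabs (picard_limit t - picard_iter k t) <= 4 * M * (1/2) ^ k.
Proof.
  pose proof (proj1 (is_lim_seq_incr_n _ k _) (is_lim_seq_picard t)) as Hl.
  apply Rabs_le_between'. split.
  - apply (is_lim_seq_le_R (fun _ => picard_iter k t - 4 * M * (1/2) ^ k)
                           (fun m => picard_iter (m + k) t)); auto.
    + intros m. pose proof (picard_iter_tail_le m k t) as H. apply Rabs_le_between' in H. lra.
    + apply is_lim_seq_const.
  - apply (is_lim_seq_le_R (fun m => picard_iter (m + k) t)
                           (fun _ => picard_iter k t + 4 * M * (1/2) ^ k)); auto.
    + intros m. pose proof (picard_iter_tail_le m k t) as H. apply Rabs_le_between' in H. lra.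
    + apply is_lim_seq_const.
Qed.

Lemma picard_limit_lipschitz t u :
  Rabs (picard_limit t - picard_limit u) <= M * Rabs (t - u).
Proof.
  apply (is_lim_seq_le_R (fun k => Rabs (picard_iter (S k) t - picard_iter (S k) u))
                         (fun _ => M * Rabs (t - u))).
  - intros k. apply picard_step_lipschitz, picard_iter_continuous.
  - apply is_lim_seq_abs with (l := Finite (picard_limit t - picard_limit u)).
    apply is_lim_seq_minus'; apply (is_lim_seq_incr_1 (fun k => picard_iter k _));
      apply is_lim_seq_picard.
  - apply is_lim_seq_const.
Qed.

Lemma picard_limit_continuous t : continuous picard_limit t.
Proof. apply lipschitz_continuous with M. apply picard_limit_lipschitz. Qed.

Lemma picard_limit_fixed t : picard_limit t = picard_step picard_limit t.
Proof.
  assert (Hstep : is_lim_seq (fun k => picard_step (picard_iter k) t) (picard_step picard_limit t)).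
  { apply is_lim_seq_half_pow_close with (2 * M). intros k.
    replace (2 * M * (1/2) ^ k) with (4 * M * (1/2) ^ k / 2) by field.
    apply picard_step_contraction.
    - apply picard_iter_continuous.
    - apply picard_limit_continuous.
    - intros s. rewrite <- Rabs_Ropp, Ropp_minus_distr. apply picard_limit_dist. }
  pose proof (proj1 (is_lim_seq_incr_1 _ _) (is_lim_seq_picard t)) as Hlim. simpl in Hlim.
  pose proof (is_lim_seq_unique _ _ Hlim) as E1.
  rewrite (is_lim_seq_unique _ _ Hstep) in E1. injection E1 as E1. exact (eq_sym E1).
Qed.

Theorem picard_fixpoint : exists psi : R -> R,
  (forall t, continuous psi t) /\ forall t, psi t = picard_step psi t.
Proof.
  exists picard_limit. split.
  - apply picard_limit_continuous.
  - apply picard_limit_fixed.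
Qed.

End Picard.

(** * Solutions of the Abel equation *)

Lemma cubic_rhs_bound G F y K Bg Bf : Rabs y <= K -> Rabs G <= Bg -> Rabs F <= Bf ->
  Rabs (G * y ^ 2 + F * y ^ 3) <= Bg * K ^ 2 + Bf * K ^ 3.
Proof.
  intros Hy HG HF.
  eapply Rle_trans. apply Rabs_triang. rewrite !Rabs_mult, <- !RPow_abs.
  assert (Rabs y ^ 2 <= K ^ 2) by (apply pow_incr; split; auto; apply Rabs_pos).
  assert (Rabs y ^ 3 <= K ^ 3) by (apply pow_incr; split; auto; apply Rabs_pos).
  apply Rplus_le_compat; apply Rmult_le_compat; auto using Rabs_pos, pow_le.
Qed.

Lemma cubic_rhs_lipschitz G F y z K Bg Bf :
  Rabs y <= K -> Rabs z <= K -> Rabs G <= Bg -> Rabs F <= Bf ->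
  Rabs (G * y ^ 2 + F * y ^ 3 - (G * z ^ 2 + F * z ^ 3))
    <= (2 * Bg * K + 3 * Bf * K ^ 2) * Rabs (y - z).
Proof.
  intros Hy Hz HG HF.
  replace (G * y ^ 2 + F * y ^ 3 - (G * z ^ 2 + F * z ^ 3))
    with ((G * (y + z) + F * (y * y + y * z + z * z)) * (y - z)) by ring.
  rewrite Rabs_mult. apply Rmult_le_compat_r; [apply Rabs_pos |].
  pose proof (Rabs_pos y). pose proof (Rabs_pos z).
  assert (Rabs (y + z) <= 2 * K) by (eapply Rle_trans; [apply Rabs_triang | lra]).
  assert (Rabs (y * y + y * z + z * z) <= 3 * K ^ 2).
  { eapply Rle_trans. apply Rabs_triang. eapply Rle_trans.
    apply Rplus_le_compat_r, Rabs_triang. rewrite !Rabs_mult. simpl. nra. }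
  eapply Rle_trans. apply Rabs_triang. rewrite !Rabs_mult.
  apply Rplus_le_compat.
  - replace (2 * Bg * K) with (Bg * (2 * K)) by ring.
    apply Rmult_le_compat; auto using Rabs_pos.
  - replace (3 * Bf * K ^ 2) with (Bf * (3 * K ^ 2)) by ring.
    apply Rmult_le_compat; auto using Rabs_pos.
Qed.

(* Saturating the unknown at level [r] makes the cubic field globally bounded and
   Lipschitz, as the Picard iteration requires; it is inactive on solutions with [|x| <= r]. *)
Definition sat (r y : R) : R := Rmax (- r) (Rmin r y).

Lemma sat_bound r y : 0 <= r -> Rabs (sat r y) <= r.
Proof.
  intros; unfold sat, Rmax, Rmin, Rabs; repeat destruct Rle_dec; repeat destruct Rcase_abs; lra.
Qed.

Lemma sat_lipschitz r y z : 0 <= r -> Rabs (sat r y - sat r z) <= Rabs (y - z).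
Proof.
  intros; unfold sat, Rmax, Rmin, Rabs; repeat destruct Rle_dec; repeat destruct Rcase_abs; lra.
Qed.

Lemma sat_id r y : Rabs y <= r -> sat r y = y.
Proof.
  intros; unfold sat, Rmax, Rmin, Rabs in *; repeat destruct Rle_dec; repeat destruct Rcase_abs;
    lra.
Qed.

Definition abel_field (g f : R -> R) (r t y : R) : R :=
  g (clamp t) * sat r y ^ 2 + f (clamp t) * sat r y ^ 3.

Section AbelField.

Variables (g f : R -> R) (Bg Bf r : R).
Hypothesis g_bound : forall t, -1 <= t <= 1 -> Rabs (g t) <= Bg.
Hypothesis f_bound : forall t, -1 <= t <= 1 -> Rabs (f t) <= Bf.
Hypothesis r_nonneg : 0 <= r.

Lemma abel_field_bound t y : Rabs (abel_field g f r t y) <= Bg * r ^ 2 + Bf * r ^ 3.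
Proof. apply cubic_rhs_bound; auto using sat_bound, clamp_in. Qed.

Lemma abel_field_lipschitz t y z :
  Rabs (abel_field g f r t y - abel_field g f r t z)
    <= (2 * Bg * r + 3 * Bf * r ^ 2) * Rabs (y - z).
Proof.
  eapply Rle_trans. apply cubic_rhs_lipschitz; auto using sat_bound, clamp_in.
  apply Rmult_le_compat_l. 2: apply sat_lipschitz; auto.
  assert (0 <= Bg) by (eapply Rle_trans; [apply Rabs_pos | apply (g_bound 0); lra]).
  assert (0 <= Bf) by (eapply Rle_trans; [apply Rabs_pos | apply (f_bound 0); lra]).
  pose proof (pow2_ge_0 r). nra.
Qed.

Lemma abel_field_continuous (psi : R -> R) :
  (forall t, continuous g t) -> (forall t, continuous f t) -> (forall t, continuous psi t) ->
  forall t, continuous (fun s => abel_field g f r s (psi s)) t.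
Proof.
  intros Cg Cf Cpsi t. unfold abel_field.
  assert (Cs : continuous (fun s => sat r (psi s)) t).
  { apply (continuous_comp psi (sat r)); auto.
    apply lipschitz_continuous with 1. intros; rewrite Rmult_1_l; apply sat_lipschitz; auto. }
  apply (continuous_plus (fun s => g (clamp s) * sat r (psi s) ^ 2)
                         (fun s => f (clamp s) * sat r (psi s) ^ 3));
    apply (continuous_mult (fun s => _ (clamp s)) (fun s => sat r (psi s) ^ _));
    try apply continuous_pow_comp; auto;
    apply (continuous_comp clamp); auto using continuous_clamp.
Qed.

Lemma abel_solution_of_fixpoint (psi : R -> R) x0 :
  (forall t, continuous g t) -> (forall t, continuous f t) -> (forall t, continuous psi t) ->
  (forall t, psi t = x0 + RInt (fun s => abel_field g f r s (psi s)) (-1) (clamp t)) ->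
  (forall t, Rabs (psi t) <= r) ->
  abel_solution g f psi /\ psi (-1) = x0.
Proof.
  intros Cg Cf Cpsi Hfix Hr. split; [split |].
  - apply continuous_within_I_iff_clamp. intros t.
    apply (continuous_comp clamp psi); auto using continuous_clamp.
  - intros t Ht.
    assert (Hint : is_derive (fun u => RInt (fun s => abel_field g f r s (psi s)) (-1) u) t
                             (abel_field g f r t (psi t))).
    { apply (is_derive_RInt (fun s => abel_field g f r s (psi s))
               (fun u => RInt (fun s => abel_field g f r s (psi s)) (-1) u) (-1) t).
      - apply filter_forall. intros; apply (RInt_correct (V := R_CompleteNormedModule)).
        apply (ex_RInt_continuous (V := R_CompleteNormedModule)). intros.
        apply abel_field_continuous; auto.
      - apply abel_field_continuous; auto. }
    apply is_derive_ext_loc with (fun u => x0 + RInt (fun s => abel_field g f r s (psi s)) (-1) u).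
    + eapply filter_imp. 2: apply locally_open_I; exact Ht.
      intros y Hy. simpl. rewrite (Hfix y), clamp_id; auto. lra.
    + unfold abel_field in Hint. rewrite clamp_id, sat_id in Hint by (auto; lra).
      pose proof (is_derive_plus (fun _ => x0) _ t 0 _ (is_derive_const x0 t) Hint) as D.
      simpl in D. unfold plus, zero in D; simpl in D. rewrite Rplus_0_l in D. exact D.
  - rewrite Hfix, clamp_id, RInt_point by lra. unfold zero; simpl. ring.
Qed.

End AbelField.

Theorem abel_solution_exists (g f : R -> R) Bg Bf x0 :
  (forall t, continuous g t) -> (forall t, continuous f t) ->
  (forall t, -1 <= t <= 1 -> Rabs (g t) <= Bg) ->
  (forall t, -1 <= t <= 1 -> Rabs (f t) <= Bf) ->
  16 * Bg * Rabs x0 + 48 * Bf * Rabs x0 ^ 2 <= 1 ->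
  exists psi, abel_solution g f psi /\ psi (-1) = x0 /\
    forall t, Rabs (psi t - x0) <= 8 * Bg * x0 ^ 2 + 16 * Bf * Rabs x0 ^ 3.
Proof.
  intros Cg Cf Hg Hf Hsmall.
  set (r := Rabs x0) in *. pose proof (Rabs_pos x0) as r0. fold r in r0.
  assert (0 <= Bg) by (eapply Rle_trans; [apply Rabs_pos | apply (Hg 0); lra]).
  assert (0 <= Bf) by (eapply Rle_trans; [apply Rabs_pos | apply (Hf 0); lra]).
  set (M := Bg * (2 * r) ^ 2 + Bf * (2 * r) ^ 3).
  assert (HFb : forall t y, Rabs (abel_field g f (2 * r) t y) <= M).
  { intros; apply abel_field_bound; auto; lra. }
  assert (HFc : forall psi : R -> R, (forall t, continuous psi t) ->
                forall t, continuous (fun s => abel_field g f (2 * r) s (psi s)) t).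
  { intros; apply abel_field_continuous; auto; lra. }
  destruct (picard_fixpoint (abel_field g f (2 * r)) M (2 * Bg * (2 * r) + 3 * Bf * (2 * r) ^ 2) x0
              HFb ltac:(intros; apply abel_field_lipschitz; auto; lra) HFc ltac:(simpl; lra))
    as [psi [Cpsi Hfix]].
  assert (Hdist : forall t, Rabs (psi t - x0) <= 8 * Bg * x0 ^ 2 + 16 * Bf * r ^ 3).
  { intros t. rewrite Hfix. eapply Rle_trans. apply picard_step_dist; auto.
    rewrite <- (pow2_abs x0). fold r. unfold M. simpl. lra. }
  assert (Hr : forall t, Rabs (psi t) <= 2 * r).
  { intros t. specialize (Hdist t). rewrite <- (pow2_abs x0) in Hdist. fold r in Hdist.
    assert (0 <= Bf * r ^ 2) by (apply Rmult_le_pos; auto; apply pow_le; lra).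
    assert (r * (8 * Bg * r + 16 * Bf * r ^ 2) <= r * 1) by (apply Rmult_le_compat_l; lra).
    replace (psi t) with (x0 + (psi t - x0)) by ring.
    eapply Rle_trans. apply Rabs_triang. fold r. lra. }
  destruct (abel_solution_of_fixpoint g f (2 * r) ltac:(lra) psi x0 Cg Cf Cpsi Hfix Hr).
  exists psi. auto.
Qed.

Lemma continuous_bounded_on_I (h : R -> R) : (forall t, continuous h t) ->
  exists B, forall t, -1 <= t <= 1 -> Rabs (h t) <= B.
Proof.
  intros Hh.
  assert (Hc : forall c, -1 <= c <= 1 -> continuity_pt (fun t => Rabs (h t)) c)
    by (intros; apply continuity_pt_filterlim, continuous_Rabs_comp, Hh).
  destruct (continuity_ab_maj _ (-1) 1 ltac:(lra) Hc) as [tmax [Hmax _]].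
  exists (Rabs (h tmax)). exact Hmax.
Qed.

Lemma abel_solution_bounded g f phi : abel_solution g f phi ->
  exists K, forall t, -1 <= t <= 1 -> Rabs (phi t) <= K.
Proof.
  intros [Hc _]. rewrite continuous_within_I_iff_clamp in Hc.
  destruct (continuous_bounded_on_I _ Hc) as [K HK].
  exists K. intros t Ht. rewrite <- (clamp_id t Ht). apply HK, Ht.
Qed.

(* [w^2 exp (-2 L x)] is nonincreasing. *)
Lemma gronwall_zero (w dw : R -> R) L s t : s <= t ->
  (forall x, continuous w x) ->
  (forall x, s < x < t -> is_derive w x (dw x)) ->
  (forall x, s <= x <= t -> w x * dw x <= L * w x ^ 2) ->
  w s = 0 -> w t = 0.
Proof.
  intros Hst Cw Dw Hw Ws.
  set (e := fun x => w x ^ 2 * exp (-2 * L * x)).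
  assert (Hle : e t <= e s).
  { apply MVT_nonincreasing
      with (fun x => 2 * exp (-2 * L * x) * (w x * dw x - L * w x ^ 2)); [lra | | |].
    - intros x. apply (continuous_mult (fun x => w x ^ 2) (fun x => exp (-2 * L * x))).
      + apply continuous_pow_comp, Cw.
      + apply (ex_derive_continuous (fun x => exp (-2 * L * x))). auto_derive. auto.
    - intros x Hx.
      assert (Dexp : is_derive (fun x => exp (-2 * L * x)) x (exp (-2 * L * x) * (-2 * L)))
        by (auto_derive; auto; ring).
      eapply is_derive_value.
      + exact (is_derive_mult (fun x => w x ^ 2) (fun x => exp (-2 * L * x)) x _ _
                 (is_derive_pow w 2 x _ (Dw x Hx)) Dexp (fun a b => Rmult_comm a b)).
      + unfold plus, mult; simpl. ring.
    - intros x Hx. pose proof (Hw x Hx). pose proof (exp_pos (-2 * L * x)). nra. }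
  unfold e in Hle. rewrite Ws in Hle.
  pose proof (exp_pos (-2 * L * t)). pose proof (pow2_ge_0 (w t)).
  assert (w t ^ 2 = 0) by (simpl in *; nra).
  simpl in *. nra.
Qed.

Lemma abel_solution_unique_forward g f Bg Bf phi1 phi2 s t :
  (forall t, -1 <= t <= 1 -> Rabs (g t) <= Bg) ->
  (forall t, -1 <= t <= 1 -> Rabs (f t) <= Bf) ->
  -1 <= s <= t -> t <= 1 ->
  abel_solution g f phi1 -> abel_solution g f phi2 -> phi1 s = phi2 s -> phi1 t = phi2 t.
Proof.
  intros Hg Hf Hst Ht1 S1 S2 Es.
  destruct (abel_solution_bounded g f phi1 S1) as [K1 HK1].
  destruct (abel_solution_bounded g f phi2 S2) as [K2 HK2].
  destruct S1 as [C1 D1], S2 as [C2 D2].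
  rewrite continuous_within_I_iff_clamp in C1, C2.
  set (K := Rmax K1 K2).
  set (rhs := fun phi x => g x * phi x ^ 2 + f x * phi x ^ 3).
  set (w := fun x => phi1 (clamp x) - phi2 (clamp x)).
  assert (Hw : forall x, -1 <= x <= 1 -> w x = phi1 x - phi2 x)
    by (intros; unfold w; rewrite clamp_id; auto).
  enough (Wt : w t = 0) by (rewrite Hw in Wt; lra).
  apply (gronwall_zero w (fun x => rhs phi1 x - rhs phi2 x) (2 * Bg * K + 3 * Bf * K ^ 2) s t);
    [lra | | | | rewrite Hw, Es by lra; ring].
  - intros x. exact (continuous_minus (K := R_AbsRing) (V := R_NormedModule) _ _ x (C1 x) (C2 x)).
  - intros x Hx.
    apply (is_derive_minus (fun x => phi1 (clamp x)) (fun x => phi2 (clamp x)));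
      apply is_derive_clamp_comp; try apply D1; try apply D2; lra.
  - intros x Hx. rewrite Hw by lra.
    assert (Hd : Rabs (rhs phi1 x - rhs phi2 x)
                 <= (2 * Bg * K + 3 * Bf * K ^ 2) * Rabs (phi1 x - phi2 x)).
    { apply cubic_rhs_lipschitz; try (apply Hg || apply Hf; lra).
      - eapply Rle_trans; [apply HK1; lra | apply Rmax_l].
      - eapply Rle_trans; [apply HK2; lra | apply Rmax_r]. }
    eapply Rle_trans. apply RRle_abs. rewrite Rabs_mult, <- (pow2_abs (phi1 x - phi2 x)).
    pose proof (Rabs_pos (phi1 x - phi2 x)). simpl. nra.
Qed.

(** * Odd coefficients give a center *)

Lemma abel_solution_reflect g f phi :
  (forall t, g (- t) = - g t) -> (forall t, f (- t) = - f t) ->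
  abel_solution g f phi -> abel_solution g f (fun t => phi (- t)).
Proof.
  intros Hg Hf [C D]. split.
  - rewrite continuous_within_I_iff_clamp in C |- *. intros t.
    apply continuous_ext with (fun u => phi (clamp (- u))).
    { intros; rewrite clamp_opp; reflexivity. }
    apply (continuous_comp (fun u => - u) (fun v => phi (clamp v))); auto.
    apply (ex_derive_continuous (fun u => - u)). auto_derive. auto.
  - intros t Ht.
    assert (Dneg : is_derive (fun u : R => - u) t (-1)) by (auto_derive; auto; ring).
    eapply is_derive_value.
    + exact (is_derive_comp phi (fun u => - u) t _ _ (D (- t) ltac:(lra)) Dneg).
    + unfold scal; simpl; unfold mult; simpl. rewrite Hg, Hf. ring.
Qed.

Theorem abel_center_of_odd (g f : R -> R) :
  (forall t, continuous g t) -> (forall t, continuous f t) ->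
  (forall t, g (- t) = - g t) -> (forall t, f (- t) = - f t) ->
  abel_center g f.
Proof.
  intros Cg Cf Og Of.
  destruct (continuous_bounded_on_I g Cg) as [Bg Hg].
  destruct (continuous_bounded_on_I f Cf) as [Bf Hf].
  assert (0 <= Bg) by (eapply Rle_trans; [apply Rabs_pos | apply (Hg 0); lra]).
  assert (0 <= Bf) by (eapply Rle_trans; [apply Rabs_pos | apply (Hf 0); lra]).
  exists (/ (64 * (1 + Bg + Bf))). split; [apply Rinv_0_lt_compat; lra |].
  intros x0 Hx0. split.
  - assert (Hsmall : 16 * Bg * Rabs x0 + 48 * Bf * Rabs x0 ^ 2 <= 1).
    { assert (Hr : Rabs x0 * (64 * (1 + Bg + Bf)) <= 1).
      { assert (Hlt : Rabs x0 * (64 * (1 + Bg + Bf)) < / (64 * (1 + Bg + Bf)) * (64 * (1 + Bg + Bf)))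
          by (apply Rmult_lt_compat_r; lra).
        rewrite Rinv_l in Hlt by lra. lra. }
      pose proof (Rabs_pos x0). simpl. nra. }
    destruct (abel_solution_exists g f Bg Bf x0 Cg Cf Hg Hf Hsmall) as [psi [Spsi [E _]]].
    exists psi. auto.
  - intros phi Sphi E.
    (* [phi] and its reflection solve the same equation and agree at [t = 0]. *)
    pose proof (abel_solution_reflect g f phi Og Of Sphi) as Srefl.
    rewrite <- E. replace (-1) with (- (1)) by ring.
    apply (abel_solution_unique_forward g f Bg Bf phi (fun t => phi (- t)) 0 1); auto; try lra.
    rewrite Ropp_0. reflexivity.
Qed.

Lemma pow_Rabs_le_1 t k : Rabs t <= 1 -> Rabs (t ^ k) <= 1.
Proof.
  intros Ht. rewrite <- RPow_abs. rewrite <- (pow1 k).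
  apply pow_incr. split; auto using Rabs_pos.
Qed.

Lemma pow_opp_odd t k : Nat.Odd k -> (- t) ^ k = - t ^ k.
Proof.
  intros [m ->]. replace (- t) with (-1 * t) by ring. rewrite Rpow_mult_distr.
  replace (2 * m + 1)%nat with (S (2 * m)) by lia. rewrite pow_1_odd. ring.
Qed.

Lemma poly_eval_continuous a N t : continuous (poly_eval a N) t.
Proof.
  induction N; unfold poly_eval; simpl.
  - apply (continuous_mult (fun _ => a 0%nat) (fun _ => 1)); apply continuous_const.
  - apply (continuous_plus (poly_eval a N) (fun t => a (S N) * (t * t ^ N))); auto.
    apply (ex_derive_continuous (fun t => a (S N) * (t * t ^ N))). auto_derive. auto.
Qed.

Lemma poly_eval_bound a N t : -1 <= t <= 1 ->
  Rabs (poly_eval a N t) <= sum_f_R0 (fun i => Rabs (a i)) N.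
Proof.
  intros Ht. unfold poly_eval. eapply Rle_trans. apply sum_f_R0_triangle.
  apply sum_Rle. intros i _. rewrite Rabs_mult.
  pose proof (pow_Rabs_le_1 t i ltac:(apply Rabs_le; lra)).
  pose proof (Rabs_pos (a i)). pose proof (Rabs_pos (t ^ i)). nra.
Qed.

Lemma poly_eval_odd a N t : (forall i, Nat.Even i -> a i = 0) ->
  poly_eval a N (- t) = - poly_eval a N t.
Proof.
  intros Ha. induction N; unfold poly_eval in *; simpl.
  - rewrite (Ha 0%nat) by (exists 0%nat; lia). ring.
  - rewrite IHN. destruct (Nat.Even_or_Odd (S N)) as [He | Ho].
    + rewrite (Ha (S N) He). ring.
    + change ((- t) * (- t) ^ N) with ((- t) ^ S N). rewrite pow_opp_odd by exact Ho. simpl. ring.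
Qed.

Lemma abel_center_of_even_coeffs_eq0 n a :
  (0 < n)%nat -> Nat.Even n -> (forall i, Nat.Even i -> a i = 0) ->
  abel_center (fun t => t ^ (n - 1)) (poly_eval a 5).
Proof.
  intros Hn He Ha. apply abel_center_of_odd.
  - intros t. apply (ex_derive_continuous (fun t => t ^ (n - 1))). auto_derive. auto.
  - apply poly_eval_continuous.
  - intros t. apply pow_opp_odd. destruct He as [m Hm]. exists (m - 1)%nat. lia.
  - intros t. apply poly_eval_odd, Ha.
Qed.

(** * A center forces the even coefficients to vanish *)

(* With [v = e1 - x q] the hypothesis says [p = x / (1 - x (h - v))]; expand this to cubic order. *)
Lemma reciprocal_expansion_identity x p h q e1 : x <> 0 -> p <> 0 ->
  / p = / x - h + (e1 - x * q) ->
  p - x - x ^ 2 * h - x ^ 3 * (h ^ 2 + q) =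
  - (x ^ 2 * e1) + x ^ 3 * (h - (e1 - x * q)) ^ 3 * p
  - x ^ 3 * (e1 - x * q) * (2 * h - (e1 - x * q)).
Proof.
  intros Hx Hp Hrel.
  assert (Z : p - x - x * (h - (e1 - x * q)) * p = 0).
  { replace (p - x - x * (h - (e1 - x * q)) * p)
      with (x * p * (/ x - h + (e1 - x * q) - / p)) by (field; auto).
    rewrite Hrel. ring. }
  transitivity ((p - x - x * (h - (e1 - x * q)) * p)
                  * (1 + x * (h - (e1 - x * q)) + x ^ 2 * (h - (e1 - x * q)) ^ 2)
                - x ^ 2 * e1 + x ^ 3 * (h - (e1 - x * q)) ^ 3 * p
                - x ^ 3 * (e1 - x * q) * (2 * h - (e1 - x * q))).
  - ring.
  - rewrite Z. ring.
Qed.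

Lemma reciprocal_expansion_bound x p h q e1 A : 0 < x -> 0 <= A -> x * (1 + A) <= 1/18 ->
  Rabs (p - x) <= 9 * x ^ 2 -> Rabs h <= 1 -> Rabs q <= 2 * A -> Rabs e1 <= 18 * A * x ^ 2 ->
  / p = / x - h + (e1 - x * q) ->
  Rabs (p - x - x ^ 2 * h - x ^ 3 * (h ^ 2 + q)) <= (27 * A + 12) * x ^ 4.
Proof.
  intros Hx HA Hs Hp Hh Hq He Hrel.
  assert (x1 : x <= 1/18) by nra. assert (x2 : A * x <= 1/18) by nra.
  apply Rabs_le_between' in Hp.
  assert (p1 : x / 2 <= p) by nra. assert (p2 : p <= 3 * x / 2) by nra.
  rewrite (reciprocal_expansion_identity x p h q e1) by (auto; lra).
  set (v := e1 - x * q).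
  assert (Hv : Rabs v <= 3 * A * x).
  { unfold v. eapply Rle_trans. apply Rabs_triang.
    rewrite Rabs_Ropp, Rabs_mult, (Rabs_right x) by lra.
    assert (x * Rabs q <= x * (2 * A)) by (apply Rmult_le_compat_l; lra).
    assert (0 <= A * x * (1 - 18 * x)) by (apply Rmult_le_pos; [apply Rmult_le_pos|]; lra).
    assert (18 * A * x ^ 2 <= A * x) by (simpl; lra). lra. }
  set (D := h - v).
  assert (HD : Rabs D <= 2).
  { unfold D. eapply Rle_trans. apply Rabs_triang. rewrite Rabs_Ropp. lra. }
  assert (x3 : 0 < x ^ 3) by (apply pow_lt; lra).
  assert (T1 : Rabs (x ^ 2 * e1) <= 18 * A * x ^ 4).
  { rewrite Rabs_mult, (Rabs_right (x ^ 2)) by (apply Rle_ge, pow_le; lra).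
    replace (18 * A * x ^ 4) with (x ^ 2 * (18 * A * x ^ 2)) by ring.
    apply Rmult_le_compat_l. apply pow_le; lra. auto. }
  assert (T2 : Rabs (x ^ 3 * D ^ 3 * p) <= 12 * x ^ 4).
  { rewrite !Rabs_mult, (Rabs_right (x ^ 3)), (Rabs_right p), <- RPow_abs by lra.
    pose proof (Rabs_pos D) as D0.
    assert (Rabs D ^ 3 <= 8) by (simpl; nra).
    assert (0 <= Rabs D ^ 3) by (apply pow_le; lra).
    replace (12 * x ^ 4) with (x ^ 3 * 8 * (3 * x / 2)) by (simpl; field).
    apply Rmult_le_compat; try apply Rmult_le_compat_l; try apply Rmult_le_pos; lra. }
  assert (T3 : Rabs (x ^ 3 * v * (2 * h - v)) <= 9 * A * x ^ 4).
  { rewrite !Rabs_mult, (Rabs_right (x ^ 3)) by lra.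
    assert (Rabs (2 * h - v) <= 3).
    { eapply Rle_trans. apply Rabs_triang.
      rewrite Rabs_Ropp, Rabs_mult, (Rabs_right 2) by lra. nra. }
    pose proof (Rabs_pos v). pose proof (Rabs_pos (2 * h - v)).
    replace (9 * A * x ^ 4) with (x ^ 3 * (3 * A * x) * 3) by (simpl; ring).
    apply Rmult_le_compat; try apply Rmult_le_compat_l; try apply Rmult_le_pos; lra. }
  assert (Tr : forall a b c, Rabs (- a + b - c) <= Rabs a + Rabs b + Rabs c)
    by (intros; unfold Rabs; repeat destruct Rcase_abs; lra).
  eapply Rle_trans. apply Tr. lra.
Qed.

Section PeriodicExpansion.

Variables (g f G Q1 Q2 Q3 psi : R -> R) (A x : R).
Hypothesis G_derive : forall t, is_derive G t (g t).
Hypothesis G_m1 : G (-1) = 0.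
Hypothesis G_1 : G 1 = 0.
Hypothesis G_bound : forall t, -1 <= t <= 1 -> Rabs (G t) <= 1.
Hypothesis f_bound : forall t, -1 <= t <= 1 -> Rabs (f t) <= A.
Hypothesis Q1_derive : forall t, is_derive Q1 t (f t).
Hypothesis Q2_derive : forall t, is_derive Q2 t (f t * G t).
Hypothesis Q3_derive : forall t, is_derive Q3 t (f t * (G t ^ 2 + Q1 t)).
Hypothesis Q1_m1 : Q1 (-1) = 0.
Hypothesis Q2_m1 : Q2 (-1) = 0.
Hypothesis Q3_m1 : Q3 (-1) = 0.
Hypothesis psi_solution : abel_solution g f psi.
Hypothesis psi_m1 : psi (-1) = x.
Hypothesis psi_1 : psi 1 = x.
Hypothesis psi_close : forall t, -1 <= t <= 1 -> Rabs (psi t - x) <= 9 * x ^ 2.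
Hypothesis x_pos : 0 < x.
Hypothesis x_small : x * (1 + A) <= 1/18.

Let A_nonneg : 0 <= A.
Proof. eapply Rle_trans. apply Rabs_pos. apply (f_bound 0). lra. Qed.

Lemma psi_lower t : -1 <= t <= 1 -> x / 2 <= psi t.
Proof.
  intros Ht. pose proof (psi_close t Ht) as H. apply Rabs_le_between' in H.
  assert (x <= 1/18) by nra. simpl in H. nra.
Qed.

(* Along a solution [(1/psi)' = - g - f psi], so the [g]-term cancels in [(1/psi + G)']. *)
Definition recip_G (t : R) : R := / psi (clamp t) + G t.

Lemma recip_G_derive t : -1 < t < 1 -> is_derive recip_G t (- f t * psi t).
Proof.
  intros Ht. destruct psi_solution as [_ D].
  assert (Hpos : psi (clamp t) <> 0) by (pose proof (psi_lower _ (clamp_in t)); lra).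
  pose proof (is_derive_inv _ t _ (is_derive_clamp_comp psi t _ Ht (D t Ht)) Hpos) as Dinv.
  eapply is_derive_value. apply (is_derive_Rplus _ _ t _ _ Dinv (G_derive t)).
  rewrite clamp_id in * by lra. field. exact Hpos.
Qed.

Lemma recip_G_continuous t : continuous recip_G t.
Proof.
  destruct psi_solution as [C _]. rewrite continuous_within_I_iff_clamp in C.
  apply continuous_Rplus.
  - apply continuous_Rinv_comp; auto. pose proof (psi_lower _ (clamp_in t)); lra.
  - eapply continuous_of_is_derive, G_derive.
Qed.

Lemma recip_G_m1 : recip_G (-1) = / x.
Proof. unfold recip_G. rewrite clamp_id, psi_m1, G_m1 by lra. ring. Qed.

Lemma recip_G_1 : recip_G 1 = / x.
Proof. unfold recip_G. rewrite clamp_id, psi_1, G_1 by lra. ring. Qed.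

Lemma Q1_bound t : -1 <= t <= 1 -> Rabs (Q1 t) <= 2 * A.
Proof.
  intros Ht. rewrite <- (Rminus_0_r (Q1 t)), <- Q1_m1.
  eapply Rle_trans.
  - apply (MVT_Rabs_le Q1 f (-1) t A); try lra.
    + intros; eapply continuous_of_is_derive, Q1_derive.
    + intros; apply Q1_derive.
    + intros; apply f_bound; lra.
  - nra.
Qed.

Lemma recip_G_first_order t : -1 <= t <= 1 ->
  Rabs (recip_G t - / x + x * Q1 t) <= 18 * A * x ^ 2.
Proof.
  intros Ht.
  replace (recip_G t - / x + x * Q1 t)
    with ((recip_G t + x * Q1 t) - (recip_G (-1) + x * Q1 (-1)))
    by (rewrite recip_G_m1, Q1_m1; ring).
  eapply Rle_trans.
  - apply (MVT_Rabs_le (fun s => recip_G s + x * Q1 s) (fun s => - f s * (psi s - x))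
                        (-1) t (9 * A * x ^ 2)); try lra.
    + intros s. apply continuous_Rplus. apply recip_G_continuous.
      apply continuous_Rscal. eapply continuous_of_is_derive, Q1_derive.
    + intros s Hs. eapply is_derive_value.
      apply is_derive_Rplus. apply recip_G_derive; lra. apply is_derive_Rscal, Q1_derive.
      ring.
    + intros s Hs. rewrite Rabs_mult, Rabs_Ropp.
      replace (9 * A * x ^ 2) with (A * (9 * x ^ 2)) by ring.
      apply Rmult_le_compat; auto using Rabs_pos; [apply f_bound | apply psi_close]; lra.
  - assert (0 <= 9 * A * x ^ 2) by (pose proof (pow2_ge_0 x); simpl in *; nra). nra.
Qed.

Lemma psi_third_order t : -1 <= t <= 1 ->
  Rabs (psi t - x - x ^ 2 * G t - x ^ 3 * (G t ^ 2 + Q1 t)) <= (27 * A + 12) * x ^ 4.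
Proof.
  intros Ht.
  apply reciprocal_expansion_bound with (e1 := recip_G t - / x + x * Q1 t); auto.
  - apply Q1_bound; auto.
  - apply recip_G_first_order; auto.
  - unfold recip_G. rewrite clamp_id by auto. ring.
Qed.

Theorem periodic_expansion :
  Rabs (x * Q1 1 + x ^ 2 * Q2 1 + x ^ 3 * Q3 1) <= 2 * A * (27 * A + 12) * x ^ 4.
Proof.
  set (E := fun t => recip_G t + x * Q1 t + x ^ 2 * Q2 t + x ^ 3 * Q3 t).
  replace (x * Q1 1 + x ^ 2 * Q2 1 + x ^ 3 * Q3 1) with (E 1 - E (-1))
    by (unfold E; rewrite recip_G_1, recip_G_m1, Q1_m1, Q2_m1, Q3_m1; ring).
  replace (2 * A * (27 * A + 12) * x ^ 4) with (A * ((27 * A + 12) * x ^ 4) * (1 - -1)) by ring.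
  apply (MVT_Rabs_le E
           (fun s => - f s * (psi s - x - x ^ 2 * G s - x ^ 3 * (G s ^ 2 + Q1 s))));
    [lra | | |].
  - intros s. unfold E.
    apply continuous_Rplus; [apply continuous_Rplus; [apply continuous_Rplus |] |];
      try apply continuous_Rscal;
      [apply recip_G_continuous | eapply continuous_of_is_derive; apply Q1_derive
      | eapply continuous_of_is_derive; apply Q2_derive
      | eapply continuous_of_is_derive; apply Q3_derive].
  - intros s Hs. eapply is_derive_value.
    + exact (is_derive_Rplus _ _ s _ _
               (is_derive_Rplus _ _ s _ _
                  (is_derive_Rplus _ _ s _ _ (recip_G_derive s Hs)
                     (is_derive_Rscal x _ s _ (Q1_derive s)))
                  (is_derive_Rscal (x ^ 2) _ s _ (Q2_derive s)))
               (is_derive_Rscal (x ^ 3) _ s _ (Q3_derive s))).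
    + ring.
  - intros s Hs. rewrite Rabs_mult, Rabs_Ropp.
    apply Rmult_le_compat;
      [apply Rabs_pos | apply Rabs_pos | apply f_bound; lra | apply psi_third_order; lra].
Qed.

End PeriodicExpansion.

Lemma eq0_of_Rabs_le_linear c B d : 0 < d -> (forall x, 0 < x < d -> Rabs c <= B * x) -> c = 0.
Proof.
  intros Hd H. destruct (Req_dec c 0) as [|Hc]; auto. exfalso.
  pose proof (Rabs_pos_lt c Hc) as Pc. pose proof (Rabs_pos B) as PB.
  set (x := Rmin (d / 2) (Rabs c / (2 * (Rabs B + 1)))).
  assert (x0 : 0 < x) by (apply Rmin_glb_lt; apply Rdiv_lt_0_compat; lra).
  assert (x1 : x <= d / 2) by apply Rmin_l.
  assert (x2 : x * (2 * (Rabs B + 1)) <= Rabs c).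
  { pose proof (Rmin_r (d / 2) (Rabs c / (2 * (Rabs B + 1)))) as Hr. fold x in Hr.
    apply Rmult_le_compat_r with (r := 2 * (Rabs B + 1)) in Hr; [| lra].
    replace (Rabs c / (2 * (Rabs B + 1)) * (2 * (Rabs B + 1))) with (Rabs c) in Hr by (field; lra).
    exact Hr. }
  specialize (H x ltac:(lra)).
  assert (B * x <= Rabs B * x) by (apply Rmult_le_compat_r; [lra | apply RRle_abs]).
  nra.
Qed.

Lemma Rabs_le_cancel_pos x y B : 0 < x -> Rabs (x * y) <= x * B -> Rabs y <= B.
Proof.
  intros Hx H. rewrite Rabs_mult, Rabs_right in H by lra.
  apply Rmult_le_reg_l with x; auto.
Qed.

Lemma eq0_of_small_perturbation c (r : R -> R) B C d : 0 < d ->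
  (forall x, 0 < x < d -> Rabs (c + x * r x) <= B * x) ->
  (forall x, 0 < x < d -> Rabs (r x) <= C) -> c = 0.
Proof.
  intros Hd Hc Hr. apply (eq0_of_Rabs_le_linear c (B + C) d Hd).
  intros x Hx. replace c with ((c + x * r x) - x * r x) at 1 by ring.
  eapply Rle_trans. apply Rabs_triang. rewrite Rabs_Ropp, Rabs_mult, (Rabs_right x) by lra.
  specialize (Hc x Hx). specialize (Hr x Hx). nra.
Qed.

Lemma cubic_coeffs_eq0 al be ga K d : 0 < d ->
  (forall x, 0 < x < d -> Rabs (x * al + x ^ 2 * be + x ^ 3 * ga) <= K * x ^ 4) ->
  al = 0 /\ be = 0 /\ ga = 0.
Proof.
  intros Hd H.
  assert (Hd1 : 0 < Rmin d 1) by (apply Rmin_glb_lt; lra).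
  pose proof (Rmin_l d 1) as Hdd1. pose proof (Rmin_r d 1) as Hd11.
  set (d1 := Rmin d 1) in *.
  pose proof (Rabs_pos K) as HK.
  assert (Hpow : forall x, 0 < x < d1 -> x ^ 3 <= x ^ 2 <= x)
    by (intros x Hx; simpl; split; nra).
  assert (H1 : forall x, 0 < x < d1 -> Rabs (al + x * (be + x * ga)) <= Rabs K * x ^ 3).
  { intros x Hx. apply (Rabs_le_cancel_pos x); [lra |].
    replace (x * (al + x * (be + x * ga))) with (x * al + x ^ 2 * be + x ^ 3 * ga) by ring.
    eapply Rle_trans. apply H; lra.
    assert (K * x ^ 4 <= Rabs K * x ^ 4)
      by (apply Rmult_le_compat_r; [apply pow_le; lra | apply RRle_abs]).
    replace (x * (Rabs K * x ^ 3)) with (Rabs K * x ^ 4) by ring. lra. }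
  assert (Hal : al = 0).
  { apply (eq0_of_small_perturbation al (fun x => be + x * ga) (Rabs K) (Rabs be + Rabs ga) d1);
      auto; intros x Hx; destruct (Hpow x Hx).
    - eapply Rle_trans. apply H1; auto. apply Rmult_le_compat_l; lra.
    - eapply Rle_trans. apply Rabs_triang. rewrite Rabs_mult, (Rabs_right x) by lra.
      pose proof (Rabs_pos ga). nra. }
  subst al.
  assert (H2 : forall x, 0 < x < d1 -> Rabs (be + x * ga) <= Rabs K * x ^ 2).
  { intros x Hx. apply (Rabs_le_cancel_pos x); [lra |].
    specialize (H1 x Hx). rewrite Rplus_0_l in H1.
    replace (x * (Rabs K * x ^ 2)) with (Rabs K * x ^ 3) by ring. exact H1. }
  assert (Hbe : be = 0).
  { apply (eq0_of_small_perturbation be (fun _ => ga) (Rabs K) (Rabs ga) d1);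
      auto; intros x Hx; destruct (Hpow x Hx); [| lra].
    eapply Rle_trans. apply H2; auto. apply Rmult_le_compat_l; lra. }
  subst be. split; auto. split; auto.
  apply (eq0_of_Rabs_le_linear ga (Rabs K) d1 Hd1).
  intros x Hx. apply (Rabs_le_cancel_pos x); [lra |].
  specialize (H2 x Hx). rewrite Rplus_0_l in H2.
  replace (x * (Rabs K * x)) with (Rabs K * x ^ 2) by ring. exact H2.
Qed.

Definition moment (a : nat -> R) (N m : nat) (t : R) : R :=
  sum_f_R0 (fun i => a i * (t ^ (i + m + 1) - (-1) ^ (i + m + 1)) / INR (i + m + 1)) N.

Lemma is_derive_moment a N m t : is_derive (moment a N m) t (t ^ m * poly_eval a N t).
Proof.
  assert (Hterm : forall i,
    is_derive (fun s => a i * (s ^ (i + m + 1) - (-1) ^ (i + m + 1)) / INR (i + m + 1))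
                                      t (t ^ m * (a i * t ^ i))).
  { intros i.
    assert (Hk : INR (i + m + 1) <> 0) by (apply not_0_INR; lia).
    auto_derive; auto.
    replace (Init.Nat.pred (i + m + 1)) with (i + m)%nat by lia.
    rewrite pow_add. field. exact Hk. }
  induction N; unfold moment, poly_eval; simpl.
  - apply Hterm.
  - eapply is_derive_value. apply (is_derive_Rplus _ _ t _ _ IHN (Hterm (S N))).
    unfold poly_eval. simpl. ring.
Qed.

Lemma moment_m1 a N m : moment a N m (-1) = 0.
Proof.
  unfold moment. induction N; simpl; rewrite ?IHN, Rminus_diag; unfold Rdiv; ring.
Qed.

Lemma moment5_at_1 a m : Nat.Even m ->
  moment a 5 m 1 = 2 * (a 0%nat / (INR m + 1) + a 2%nat / (INR m + 3) + a 4%nat / (INR m + 5)).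
Proof.
  intros [q Hq]. unfold moment.
  set (term := fun i => a i * (1 ^ (i + m + 1) - (-1) ^ (i + m + 1)) / INR (i + m + 1)).
  assert (Hev : forall i, Nat.Even i -> term i = 2 * a i / (INR i + INR m + 1)).
  { intros i [j Hj]. unfold term. rewrite pow1.
    replace (i + m + 1)%nat with (S (2 * (j + q))) by lia. rewrite pow_1_odd.
    replace (S (2 * (j + q))) with (i + m + 1)%nat by lia. rewrite !plus_INR. simpl. field.
    pose proof (pos_INR i). pose proof (pos_INR m). lra. }
  assert (Hodd : forall i, Nat.Odd i -> term i = 0).
  { intros i [j Hj]. unfold term. rewrite pow1.
    replace (i + m + 1)%nat with (2 * (j + q + 1))%nat by lia. rewrite pow_1_even.
    unfold Rdiv. ring. }
  cbn [sum_f_R0].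
  rewrite (Hev 0%nat), (Hodd 1%nat), (Hev 2%nat), (Hodd 3%nat), (Hev 4%nat), (Hodd 5%nat);
    try (exists 0%nat; lia); try (exists 1%nat; lia); try (exists 2%nat; lia).
  simpl. field.
  pose proof (pos_INR m). repeat split; lra.
Qed.

Lemma moment_system_eq0 a0 a2 a4 y1 y2 : 0 < y1 -> y1 < y2 ->
  a0 + a2 / 3 + a4 / 5 = 0 ->
  a0 / (y1 + 1) + a2 / (y1 + 3) + a4 / (y1 + 5) = 0 ->
  a0 / (y2 + 1) + a2 / (y2 + 3) + a4 / (y2 + 5) = 0 ->
  a0 = 0 /\ a2 = 0 /\ a4 = 0.
Proof.
  intros H1 H2 E0 E1 E2.
  assert (Elim : forall y, 0 < y -> a0 / (y + 1) + a2 / (y + 3) + a4 / (y + 5) = 0 ->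
             5 * a2 * (y + 5) + 6 * a4 * (y + 3) = 0).
  { intros y Hy Ey.
    assert (a0 = - a2 / 3 - a4 / 5) by lra. subst a0.
    assert (Hpos : 0 < 2 * y / (15 * (y + 1) * (y + 3) * (y + 5)))
      by (apply Rdiv_lt_0_compat; [lra | repeat apply Rmult_lt_0_compat; lra]).
    assert (Z : (5 * a2 * (y + 5) + 6 * a4 * (y + 3))
                * (2 * y / (15 * (y + 1) * (y + 3) * (y + 5))) = 0).
    { rewrite <- Ey. field. lra. }
    apply Rmult_integral in Z. lra. }
  pose proof (Elim y1 H1 E1). pose proof (Elim y2 ltac:(lra) E2).
  assert (Hd : (y2 - y1) * (5 * a2 + 6 * a4) = 0) by lra.
  apply Rmult_integral in Hd. destruct Hd as [Hd | Hd]; [lra |].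
  assert (a4 = 0) by nra. repeat split; lra.
Qed.

Section Necessity.

Variables (n : nat) (a : nat -> R).
Hypothesis n_pos : (0 < n)%nat.
Hypothesis n_even : Nat.Even n.

Let A := sum_f_R0 (fun i => Rabs (a i)) 5.

Let A_nonneg : 0 <= A.
Proof. apply cond_pos_sum. intros; apply Rabs_pos. Qed.

Lemma small_periodic_solution :
  abel_center (fun t => t ^ (n - 1)) (poly_eval a 5) ->
  exists d, 0 < d /\ forall x, 0 < x < d -> x * (1 + A) <= 1/64 /\
    exists psi, abel_solution (fun t => t ^ (n - 1)) (poly_eval a 5) psi /\
      psi (-1) = x /\ psi 1 = x /\ forall t, Rabs (psi t - x) <= 9 * x ^ 2.
Proof.
  intros [eps [Heps Hc]].
  exists (Rmin eps (/ (64 * (1 + A)))).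
  split; [apply Rmin_glb_lt; auto; apply Rinv_0_lt_compat; lra |].
  intros x [Hx Hxd].
  pose proof (Rmin_l eps (/ (64 * (1 + A)))). pose proof (Rmin_r eps (/ (64 * (1 + A)))).
  assert (Hs : x * (1 + A) <= 1/64).
  { assert (Hle : x * (64 * (1 + A)) <= / (64 * (1 + A)) * (64 * (1 + A)))
      by (apply Rmult_le_compat_r; lra).
    rewrite Rinv_l in Hle by lra. lra. }
  split; auto.
  destruct (abel_solution_exists (fun t => t ^ (n - 1)) (poly_eval a 5) 1 A x)
    as [psi [Spsi [Em1 Hd]]].
  - intros t. apply (ex_derive_continuous (fun t => t ^ (n - 1))). auto_derive. auto.
  - apply poly_eval_continuous.
  - intros. apply pow_Rabs_le_1, Rabs_le. lra.
  - intros. apply poly_eval_bound; auto.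
  - rewrite Rabs_right by lra. nra.
  - exists psi. split; [exact Spsi | split; [exact Em1 | split]].
    + apply (proj2 (Hc x ltac:(rewrite Rabs_right; lra))); auto.
    + intros t. eapply Rle_trans. apply Hd. rewrite Rabs_right by lra. simpl. nra.
Qed.

Let n_ge_2 : 2 <= INR n.
Proof. destruct n_even as [k Hk]. replace 2 with (INR 2) by (simpl; ring). apply le_INR. lia. Qed.

Let prim_pow (t : R) : R := / INR n * (t ^ n - 1).

Let mom2 (t : R) : R := / INR n * (moment a 5 n t - moment a 5 0 t).

Let mom3 (t : R) : R :=
  / INR n ^ 2 * (moment a 5 (2 * n) t - 2 * moment a 5 n t + moment a 5 0 t)
  + / 2 * moment a 5 0 t ^ 2.

Lemma is_derive_prim_pow t : is_derive prim_pow t (t ^ (n - 1)).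
Proof.
  unfold prim_pow. auto_derive; auto.
  replace (Init.Nat.pred n) with (n - 1)%nat by lia. field. lra.
Qed.

Lemma prim_pow_m1 : prim_pow (-1) = 0.
Proof. unfold prim_pow. destruct n_even as [k ->]. rewrite pow_1_even. ring. Qed.

Lemma prim_pow_1 : prim_pow 1 = 0.
Proof. unfold prim_pow. rewrite pow1. ring. Qed.

Lemma prim_pow_bound t : -1 <= t <= 1 -> Rabs (prim_pow t) <= 1.
Proof.
  intros Ht. unfold prim_pow.
  rewrite Rabs_mult, Rabs_right by (apply Rle_ge, Rlt_le, Rinv_0_lt_compat; lra).
  pose proof (pow_Rabs_le_1 t n ltac:(apply Rabs_le; lra)) as Hp.
  assert (Rabs (t ^ n - 1) <= 2) by (apply Rabs_le_between in Hp; apply Rabs_le; lra).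
  assert (/ INR n <= / 2) by (apply Rinv_le_contravar; lra).
  assert (0 < / INR n) by (apply Rinv_0_lt_compat; lra).
  pose proof (Rabs_pos (t ^ n - 1)). nra.
Qed.

Lemma is_derive_mom2 t : is_derive mom2 t (poly_eval a 5 t * prim_pow t).
Proof.
  eapply is_derive_value.
  - apply is_derive_Rscal, is_derive_Rminus; apply is_derive_moment.
  - unfold prim_pow. ring.
Qed.

Lemma is_derive_mom3 t : is_derive mom3 t (poly_eval a 5 t * (prim_pow t ^ 2 + moment a 5 0 t)).
Proof.
  eapply is_derive_value.
  - apply is_derive_Rplus.
    + apply is_derive_Rscal. apply is_derive_Rplus; [apply is_derive_Rminus |];
        [| apply is_derive_Rscal |]; apply is_derive_moment.
    + apply is_derive_Rscal, (is_derive_pow (moment a 5 0)), is_derive_moment.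
  - unfold prim_pow.
    replace (t ^ (2 * n)) with ((t ^ n) ^ 2) by (rewrite <- pow_mult; f_equal; lia).
    simpl. field. lra.
Qed.

Lemma center_moments_vanish :
  abel_center (fun t => t ^ (n - 1)) (poly_eval a 5) ->
  moment a 5 0 1 = 0 /\ moment a 5 n 1 = 0 /\ moment a 5 (2 * n) 1 = 0.
Proof.
  intros Hc. destruct (small_periodic_solution Hc) as [d [Hd Hsol]].
  assert (Key : forall x, 0 < x < d ->
    Rabs (x * moment a 5 0 1 + x ^ 2 * mom2 1 + x ^ 3 * mom3 1) <= 2 * A * (27 * A + 12) * x ^ 4).
  { intros x Hx. destruct (Hsol x Hx) as [Hsmall [psi [Spsi [Em1 [E1 Hclose]]]]].
    apply (periodic_expansion (fun t => t ^ (n - 1)) (poly_eval a 5) prim_pow (moment a 5 0)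
             mom2 mom3 psi A x);
      auto using is_derive_prim_pow, prim_pow_m1, prim_pow_1, prim_pow_bound, poly_eval_bound,
        is_derive_mom2, is_derive_mom3;
      try lra.
    - intros t. eapply is_derive_value. apply is_derive_moment. simpl. ring.
    - apply moment_m1.
    - unfold mom2. rewrite !moment_m1. ring.
    - unfold mom3. rewrite !moment_m1. ring. }
  destruct (cubic_coeffs_eq0 _ _ _ _ _ Hd Key) as [Z0 [Z2 Z3]].
  assert (Zn : moment a 5 n 1 = 0).
  { unfold mom2 in Z2. rewrite Z0, Rminus_0_r in Z2.
    apply Rmult_integral in Z2. destruct Z2 as [Z | Z]; auto.
    exfalso. apply (Rinv_neq_0_compat (INR n)); lra. }
  unfold mom3 in Z3. rewrite Z0, Zn in Z3.
  replace (/ INR n ^ 2 * (moment a 5 (2 * n) 1 - 2 * 0 + 0) + / 2 * 0 ^ 2)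
    with (/ INR n ^ 2 * moment a 5 (2 * n) 1) in Z3 by ring.
  apply Rmult_integral in Z3. destruct Z3 as [Z | Z]; [| auto].
  exfalso. apply (Rinv_neq_0_compat (INR n ^ 2)); auto. apply pow_nonzero. lra.
Qed.

Theorem even_coeffs_eq0_of_abel_center :
  abel_center (fun t => t ^ (n - 1)) (poly_eval a 5) ->
  a 0%nat = 0 /\ a 2%nat = 0 /\ a 4%nat = 0.
Proof.
  intros Hc. destruct (center_moments_vanish Hc) as [M0 [Mn M2n]].
  rewrite moment5_at_1 in M0 by (exists 0%nat; lia).
  rewrite moment5_at_1 in Mn by exact n_even.
  rewrite moment5_at_1 in M2n by (exists n; lia).
  rewrite mult_INR in M2n. simpl (INR 0) in M0. simpl (INR 2) in M2n.
  apply (moment_system_eq0 _ _ _ (INR n) ((1 + 1) * INR n)); lra.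
Qed.

End Necessity.

Theorem corollary1 (n : nat) (a : nat -> R) :
  (0 < n)%nat -> Nat.Even n ->
  (forall i : nat, (5 < i)%nat -> a i = 0) ->
  (abel_center (fun t => t ^ (n - 1)) (poly_eval a 5)
   <-> (forall i : nat, Nat.Even i -> a i = 0)).
Proof.
  intros Hn He Hbig. split.
  - intros Hc i Hi. destruct (even_coeffs_eq0_of_abel_center n a Hn He Hc) as [Z0 [Z2 Z4]].
    destruct (le_lt_dec i 5) as [Hle | Hlt]; [| apply Hbig; lia].
    destruct i as [|[|[|[|[|[|i]]]]]]; auto; exfalso; destruct Hi as [k Hk]; lia.
  - apply abel_center_of_even_coeffs_eq0; auto.
Qed.
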